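(* Let $K$ be a field, $S=K[x_1,\ldots,x_n]$, and let $I\subseteq S$ be a squarefree strongly stable ideal generated in degree $d$. Then for all $j\ge0$, \[ \mu_{d+j}(I)=\sum_{i=0}^{n-d}\binom{n-d-i}{j}m_{d+i}(I). \]
   Context: A squarefree monomial ideal $I$ with minimal monomial generating set $G(I)$ is squarefree strongly stable if for every $u\in G(I)$ and all $i<j$ with $x_j\mid u$ and $x_i\nmid u$, one has $x_iu/x_j\in I$. For a monomial $u$, $m(u)=\max\{j: x_j\mid u\}$. $G_i(I)=\{u\in G(I): m(u)=i\}$ and $m_i(I)=|G_i(I)|$. $I_{[j]}$ is the ideal generated by all squarefree monomials of degree $j$ in $I$, and $\mu_j(I)$ is the number of minimal monomial generators of $I_{[j]}$ (i.e., the number of squarefree monomials of degree $j$ in $I$). Binomial coefficients $\binom{a}{b}$ with $b>a\ge0$ are $0$. *)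

From mathcomp Require Import all_boot.
Set Implicit Arguments. Unset Strict Implicit. Unset Printing Implicit Defensive.

(* Encoding: the variables x_1,...,x_n of S = K[x_1..x_n] are indexed by
   k : 'I_n, with x_(k+1) <-> k.  A squarefree monomial is identified with
   its support, a set u : {set 'I_n}; deg u = #|u|.  A squarefree monomial
   ideal I is given by its minimal monomial generating set G = G(I).
   (When all generators have the same degree d, G is automatically an
   antichain, hence the minimal generating set of the ideal it generates.) *)

Section SqfIdeals.
Variable n : nat.

Definition inI (G : {set {set 'I_n}}) (u : {set 'I_n}) : bool :=
  [exists g in G, g \subset u].

(* m(u) = max { j : x_j | u }  (1-based index; m(1) = 0) *)
Definition mmax (u : {set 'I_n}) : nat := \max_(k in u) (val k).+1.

Definition sqf_strongly_stable (G : {set {set 'I_n}}) : Prop :=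
  forall u, u \in G -> forall i j : 'I_n, (val i < val j)%N ->
    j \in u -> i \notin u -> inI G (i |: (u :\ j)).

Definition m_ (G : {set {set 'I_n}}) (i : nat) : nat :=
  #|[set u in G | mmax u == i]|.

Definition mu (G : {set {set 'I_n}}) (j : nat) : nat :=
  #|[set u : {set 'I_n} | (#|u| == j) && inI G u]|.

End SqfIdeals.

From mathcomp Require Import all_boot.
From mathcomp Require Import zify.
Set Implicit Arguments. Unset Strict Implicit. Unset Printing Implicit Defensive.

(* Every squarefree monomial w of I factors uniquely as w = u v with u in G(I)
   and v supported on the variables x_k, k > m(u): existence comes from
   strong stability, applied to the generator dividing w whose support has
   the least index sum; uniqueness holds because all generators have the same
   degree.  For fixed u there are 'C(n - m(u), j) such v of degree j, so
   mu_(d+j)(I) = \sum_(u in G) 'C(n - m(u), j), and grouping the generators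
   by m(u) = d + i gives the formula. *)

Lemma card_set_sum (T : finType) (P : pred T) :
  #|[set x | P x]| = \sum_x (P x : nat).
Proof. by rewrite -sum1dep_card big_mkcond; apply: eq_bigr => x _; case: (P x). Qed.

Lemma card_ord_geq n m : m <= n -> #|[set k : 'I_n | m <= k]| = n - m.
Proof.
move=> le_mn; rewrite card_set_sum -(big_mkord xpredT (fun i => (m <= i : nat))).
rewrite (@big_cat_nat _ _ _ m 0 n) //= big_nat_cond big1 => [|i]; last first.
  by rewrite andbT => /andP[_ lt_im]; rewrite leqNgt lt_im.
rewrite add0n big_nat_cond (eq_bigr (fun _ => 1)) => [|i /andP[/andP[-> _] _]] //.
by rewrite -big_nat_cond sum_nat_const_nat muln1.
Qed.

Lemma sum_nat_eq_shift (F : nat -> nat) d N m : d <= m < d + N ->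
  \sum_(0 <= i < N) F i * (m == d + i) = F (m - d).
Proof.
move=> /andP[le_dm lt_m].
rewrite (eq_bigr (fun i => if i == m - d then F i else 0)) => [|i _]; last first.
  have -> : (m == d + i) = (i == m - d) by apply/eqP/eqP; lia.
  by case: (i == m - d); rewrite ?muln1 ?muln0.
by rewrite -big_mkcond big_nat1_eq; have -> : 0 <= m - d < N by lia.
Qed.

Section EliahouKervaire.
Variable n : nat.
Implicit Types (u v w : {set 'I_n}) (G : {set {set 'I_n}}).

Definition above u := [set k : 'I_n | mmax u <= k].

Definition splits u w := (u \subset w) && (w :\: u \subset above u).

Lemma mmax_gt u k : k \in u -> k < mmax u.
Proof. by move=> ku; apply: (@leq_bigmax_cond _ _ (fun k : 'I_n => k.+1)). Qed.

Lemma mmax_leq u : mmax u <= n.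
Proof. by apply/bigmax_leqP => k _; apply: ltn_ord. Qed.

Lemma mmax_leqP u m : reflect (forall k, k \in u -> k < m) (mmax u <= m).
Proof.
apply: (iffP idP) => [le_um k /mmax_gt lt_k|lt_um]; first exact: leq_trans le_um.
by apply/bigmax_leqP => k /lt_um.
Qed.

Lemma card_above u : #|above u| = n - mmax u.
Proof. exact: card_ord_geq (mmax_leq u). Qed.

Lemma card_leq_mmax u : #|u| <= mmax u.
Proof.
have sub_u : u \subset ~: above u.
  by apply/subsetP => k ku; rewrite !inE -ltnNge mmax_gt.
rewrite (leq_trans (subset_leq_card sub_u)) // cardsCs setCK card_above card_ord.
by have := mmax_leq u; lia.
Qed.

Lemma disjoint_above u v k : v \subset above u -> k \in v -> k \notin u.
Proof.
move=> /subsetP v_above /v_above; rewrite inE => le_k.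
by apply/negP => /mmax_gt; rewrite ltnNge le_k.
Qed.

Lemma setUKD u v : v \subset above u -> (u :|: v) :\: u = v.
Proof.
move=> v_above; apply/setP => k; rewrite !inE.
by case kv: (k \in v); rewrite ?orbF ?andNb // orbT andbT (disjoint_above v_above kv).
Qed.

Lemma card_splits u j :
  #|[set w : {set 'I_n} | (#|w| == #|u| + j) && splits u w]| = 'C(n - mmax u, j).
Proof.
rewrite -card_above -cards_draws.
have inj : {in [set v : {set 'I_n} | v \subset above u & #|v| == j] &, injective (setU u)}.
  by move=> a b; rewrite !inE => /andP[/setUKD a_eq _] /andP[/setUKD b_eq _] ab; rewrite -a_eq ab b_eq.
rewrite -(card_in_imset inj); apply: eq_card => w; apply/idP/imsetP.
  rewrite inE => /andP[/eqP card_w /andP[uw w_above]].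
  exists (w :\: u); last by rewrite -{1}(setID w u) (setIidPr uw).
  by rewrite inE w_above cardsD (setIidPr uw) card_w addKn eqxx.
case=> v; rewrite inE => /andP[v_above /eqP <-] ->.
have uIv : u :&: v = set0.
  apply/setP => k; rewrite !inE; apply/negP => /andP[ku kv].
  by rewrite (negbTE (disjoint_above v_above kv)) in ku.
by rewrite inE /splits subsetUl setUKD // cardsU uIv cards0 subn0 eqxx.
Qed.

(* Replacing a variable of u by a smaller one lowers the index sum; so a
   generator dividing w of least index sum can have no variable of w smaller
   than its own maximal one outside it. *)
Lemma splits_exists G w :
  sqf_strongly_stable G -> inI G w -> exists2 u, u \in G & splits u w.
Proof.
move=> stableG /existsP[g0 /andP[g0G g0w]].
pose weight v := \sum_(k in v) val k.
have [u /andP[uG uw] u_min] :=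
  @arg_minnP _ g0 (fun g => (g \in G) && (g \subset w)) weight (introT andP (conj g0G g0w)).
exists u; rewrite // /splits uw; apply/subsetP => x /setDP[xw xNu].
rewrite inE leqNgt; apply/negP => lt_xu.
have [y yu le_yx] : exists2 y, y \in u & x <= y.
  apply/exists_inP; move: lt_xu; apply: contraLR; rewrite negb_exists_in -leqNgt.
  by move=> /forall_inP lt_all; apply/mmax_leqP => k /lt_all; rewrite -ltnNge.
have lt_xy : x < y by rewrite ltn_neqAle le_yx andbT; apply: contraNneq xNu => /val_inj->.
have [g' /andP[g'G g'_sub]] := existsP (stableG u uG x y lt_xy yu xNu).
have g'w : g' \subset w.
  apply: subset_trans g'_sub _; rewrite subUset sub1set xw /=.
  exact: subset_trans (subD1set u y) uw.
have u_le_g' := u_min g' (introT andP (conj g'G g'w)).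
have g'_le : weight g' <= weight (x |: (u :\ y)).
  by apply: (sub_le_big leqnn (fun a b => leq_addr b a)) => k; apply: (subsetP g'_sub).
have weight_swap : weight (x |: (u :\ y)) + y = weight u + x.
  rewrite /weight big_setU1 ?inE ?(negbTE xNu) ?andbF //= (big_setD1 y yu) /=; lia.
lia.
Qed.

Lemma splits_uniq d u1 u2 w :
  #|u1| = d -> #|u2| = d -> splits u1 w -> splits u2 w -> u1 = u2.
Proof.
move=> card1 card2 /andP[u1w w_above1] /andP[u2w w_above2].
apply/eqP; apply: contraT => ne.
have [x] : exists x, x \in u1 :\: u2.
  by apply/set0Pn; rewrite setD_eq0; apply: contra ne => s12; rewrite eqEcard s12 card1 card2 leqnn.
have [y] : exists y, y \in u2 :\: u1.
  by apply/set0Pn; rewrite setD_eq0; apply: contra ne => s21; rewrite eq_sym eqEcard s21 card1 card2 leqnn.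
rewrite !inE => /andP[yN1 yu2] /andP[xN2 xu1].
have /(subsetP w_above2) : x \in w :\: u2 by rewrite inE xN2 (subsetP u1w).
have /(subsetP w_above1) : y \in w :\: u1 by rewrite inE yN1 (subsetP u2w).
by rewrite !inE; have := mmax_gt xu1; have := mmax_gt yu2; lia.
Qed.

Lemma splits_count G d w :
  (forall u, u \in G -> #|u| = d) -> sqf_strongly_stable G ->
  \sum_(u in G) (splits u w : nat) = inI G w.
Proof.
move=> degG stableG; case wI: (inI G w); last first.
  rewrite big1 // => u uG; apply/eqP; rewrite eqb0; apply: contraFN wI => /andP[uw _].
  by apply/existsP; exists u; rewrite uG.
have [u0 u0G split0] := splits_exists stableG wI.
rewrite (bigD1 u0) //= split0 big1 // => u /andP[uG ne]; apply/eqP; rewrite eqb0.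
by apply: contraNN ne => split_u; rewrite (splits_uniq (degG _ uG) (degG _ u0G) split_u split0).
Qed.

End EliahouKervaire.

Theorem lemma4p1 (n d : nat) (G : {set {set 'I_n}}) :
  (forall u, u \in G -> #|u| = d) ->
  sqf_strongly_stable G ->
  forall j : nat,
    mu G (d + j) = \sum_(0 <= i < (n - d).+1) 'C(n - d - i, j) * m_ G (d + i).
Proof.
move=> degG stableG j.
have mu_sum : mu G (d + j) = \sum_(u in G) 'C(n - mmax u, j).
  rewrite /mu card_set_sum.
  under eq_bigr do rewrite -mulnb -(splits_count _ degG stableG) big_distrr.
  rewrite exchange_big /=; apply: eq_bigr => u uG.
  by rewrite -card_splits card_set_sum degG //; apply: eq_bigr => w _; rewrite mulnb.
have m_sum i : m_ G (d + i) = \sum_(u in G) (mmax u == d + i : nat).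
  rewrite /m_ card_set_sum [RHS]big_mkcond; apply: eq_bigr => u _.
  by case: (u \in G).
under [RHS]eq_bigr do rewrite m_sum big_distrr.
rewrite mu_sum exchange_big; apply: eq_bigr => u uG /=.
have := card_leq_mmax u; have := mmax_leq u; rewrite degG // => le_n le_d.
rewrite (sum_nat_eq_shift (fun i => 'C(n - d - i, j))); last by lia.
by congr 'C(_, _); lia.
Qed.
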